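(* $\mathsf{FindHS}_{\boldsymbol{\Sigma}^0_1} \times \mathsf{FindHS}_{\boldsymbol{\Sigma}^0_1} \le_{\mathrm{sW}} \mathsf{FindHS}_{\boldsymbol{\Sigma}^0_1}$.
   Context: Strong Weihrauch reducibility: $f\le_{\mathrm{sW}} g$ iff there are computable $\Phi,\Psi$ on Baire space with $\Psi\circ G\circ\Phi$ realizing $f$ for every realizer $G$ of $g$. $f\times g$ is the parallel product $(x,z)\mapsto f(x)\times g(z)$. The Ramsey space $[\mathbb{N}]^\mathbb{N}$ is the set of strictly increasing functions $\mathbb{N}\to\mathbb{N}$ with Baire-space topology; $fg=f\circ g$. For $P\subseteq[\mathbb{N}]^\mathbb{N}$, $f$ is homogeneous for $P$ if either $fg\in P$ for all $g\in[\mathbb{N}]^\mathbb{N}$ or $fg\notin P$ for all $g$; $\mathrm{HS}(P)$ is the set of homogeneous solutions. Open sets of $[\mathbb{N}]^\mathbb{N}$ are named by enumerations of sets of finite strictly increasing strings whose cones have union the set. $\mathsf{FindHS}_{\boldsymbol{\Sigma}^0_1}$: input an open $P$ with $\mathrm{HS}(P)\cap P\ne\emptyset$, output any element of $\mathrm{HS}(P)\cap P$. *)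

From mathcomp Require Import all_boot.
Set Implicit Arguments. Unset Strict Implicit. Unset Printing Implicit Defensive.

Inductive prf : Type :=
| PZero : prf
| PSucc : prf
| PProj : nat -> prf
| PComp : prf -> list prf -> prf
| PRec  : prf -> prf -> prf
| PMin  : prf -> prf.

Inductive peval : prf -> seq nat -> nat -> Prop :=
| ev_zero v : peval PZero v 0
| ev_succ v : peval PSucc v (head 0 v).+1
| ev_proj i v : peval (PProj i) v (nth 0 v i)
| ev_comp f gs v ws y :
    pevals gs v ws -> peval f ws y -> peval (PComp f gs) v y
| ev_rec0 f g v y : peval f v y -> peval (PRec f g) (0 :: v) y
| ev_recS f g n v y z :
    peval (PRec f g) (n :: v) y -> peval g (n :: y :: v) z ->
    peval (PRec f g) (n.+1 :: v) z
| ev_min f v n :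
    peval f (n :: v) 0 ->
    (forall m, m < n -> exists k, peval f (m :: v) k.+1) ->
    peval (PMin f) v n
with pevals : list prf -> seq nat -> seq nat -> Prop :=
| evs_nil v : pevals nil v [::]
| evs_cons g gs v y ys :
    peval g v y -> pevals gs v ys -> pevals (g :: gs) v (y :: ys).

Definition computable_nat (h : nat -> nat) : Prop :=
  exists c, forall x, peval c [:: x] (h x).

Definition computable_seq (h : seq nat -> seq nat) : Prop :=
  computable_nat (fun x => CodeSeq.code (h (CodeSeq.decode x))).

Definition baire := nat -> nat.

Definition prefix (p : baire) (n : nat) : seq nat := mkseq p n.

(* The functional given by the (computable) approximation h on finite
   prefixes maps input p to output q: every output digit is eventually
   produced, and every produced digit is correct. *)
Definition fcomputes (h : seq nat -> seq nat) (p q : baire) : Prop :=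
  (forall i, exists n, i < size (h (prefix p n))) /\
  (forall n i, i < size (h (prefix p n)) -> nth 0 (h (prefix p n)) i = q i).

Definition incr (f : baire) : Prop := forall n, f n < f n.+1.

Definition homogeneous (P : baire -> Prop) (f : baire) : Prop :=
  incr f /\
  ((forall g, incr g -> P (f \o g)) \/ (forall g, incr g -> ~ P (f \o g))).

(* Names of open sets: p n = 0 means "nothing", p n = k.+1 enumerates the
   finite string CodeSeq.decode k, which must be strictly increasing. *)
Definition open_name (p : baire) : Prop :=
  forall n, 0 < p n -> sorted ltn (CodeSeq.decode (p n).-1).

Definition is_prefix_of (s : seq nat) (f : baire) : Prop :=
  forall i, i < size s -> nth 0 s i = f i.

Definition open_of (p : baire) (f : baire) : Prop :=
  incr f /\ exists n, 0 < p n /\ is_prefix_of (CodeSeq.decode (p n).-1) f.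

(* FindHS_{Sigma^0_1} on names: domain and solutions (elements of
   [N]^N are named by themselves). *)
Definition FindHS_dom (p : baire) : Prop :=
  open_name p /\ exists f, homogeneous (open_of p) f /\ open_of p f.

Definition FindHS_sol (p r : baire) : Prop :=
  homogeneous (open_of p) r /\ open_of p r.

Definition pleft (p : baire) : baire := fun n => p n.*2.
Definition pright (p : baire) : baire := fun n => p n.*2.+1.

Definition FindHS2_dom (p : baire) : Prop :=
  FindHS_dom (pleft p) /\ FindHS_dom (pright p).

Definition FindHS2_sol (p r : baire) : Prop :=
  FindHS_sol (pleft p) (pleft r) /\ FindHS_sol (pright p) (pright r).

Definition realizer (dom : baire -> Prop) (sol : baire -> baire -> Prop)
  (G : baire -> baire) : Prop :=
  forall p, dom p -> sol p (G p).

Definition sW_le (fdom : baire -> Prop) (fsol : baire -> baire -> Prop)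
  (gdom : baire -> Prop) (gsol : baire -> baire -> Prop) : Prop :=
  exists hPhi hPsi : seq nat -> seq nat,
    computable_seq hPhi /\ computable_seq hPsi /\
    forall G, realizer gdom gsol G ->
      forall p, fdom p ->
        exists q, fcomputes hPhi p q /\
          exists r, fcomputes hPsi (G q) r /\ fsol p r.

From Pilot Require Import Defs.
From mathcomp Require Import all_boot zify.
From Stdlib Require Import FunctionalExtensionality.
Set Implicit Arguments. Unset Strict Implicit. Unset Printing Implicit Defensive.

(* Pair naturals by <x, w> = 2^x (2w + 1), with coordinates hdN and tlN.  From the
   interleaved names of two open sets P1 and P2, Phi computes a name of the open set Q
   of increasing f whose coordinate sequences hdN \o f and tlN \o f lie in P1 and P2
   and increase on their first two entries.  If f1 and f2 are homogeneous solutions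
   then so is <f1, f2> for Q.  Conversely, if R is a homogeneous solution for Q, every
   subsequence R \o g lies in Q: hence every subsequence of hdN \o R lies in P1, and
   taking for g the shifts shows that hdN \o R is increasing, so it is a homogeneous
   solution for P1 (likewise tlN \o R for P2); Psi interleaves the two.  Each output
   entry of Phi and Psi depends on finitely many input entries, and is computed by
   primitive recursion on the codes of finite sequences. *)

Definition computable n (f : seq nat -> nat) : Prop :=
  exists c, forall v, size v = n -> peval c v (f v).

Fixpoint all_computable n (fs : seq (seq nat -> nat)) : Prop :=
  if fs is f :: fs' then computable n f /\ all_computable n fs' else True.

Lemma all_computable_pevals n fs : all_computable n fs ->
  exists cs, forall v, size v = n -> pevals cs v [seq f v | f <- fs].
Proof.
elim: fs => [|f fs IH] /=; first by exists nil => v _; constructor.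
by case=> [[c Hc] /IH [cs Hcs]]; exists (c :: cs) => v Hv; constructor; auto.
Qed.

Lemma computable_comp m n f fs : computable m f -> size fs = m ->
  all_computable n fs -> computable n (fun v => f [seq g v | g <- fs]).
Proof.
case=> c Hc Hs /all_computable_pevals [cs Hcs]; exists (PComp c cs) => v Hv.
by econstructor; [exact: Hcs | apply: Hc; rewrite size_map].
Qed.

Lemma eq_computable n f g : (forall v, size v = n -> f v = g v) ->
  computable n f -> computable n g.
Proof. by move=> fg [c Hc]; exists c => v Hv; rewrite -fg //; apply: Hc. Qed.

Lemma computable_proj n i : computable n (fun v => nth 0 v i).
Proof. by exists (PProj i) => v _; constructor. Qed.

Lemma computable_succ n f : computable n f -> computable n (fun v => (f v).+1).
Proof.
have succ : computable 1 (fun v => (head 0 v).+1) by exists PSucc => v _; constructor.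
by move=> cf; apply: (computable_comp (fs := [:: f]) succ).
Qed.

Lemma computable_const n k : computable n (fun _ => k).
Proof.
elim: k => [|k]; last exact: computable_succ.
by exists (PComp PZero [::]) => v _; econstructor; constructor.
Qed.

Fixpoint primrec (b : nat) (s : nat -> nat -> nat) (k : nat) : nat :=
  if k is k'.+1 then s k' (primrec b s k') else b.

Lemma computable_primrec n b s : computable n b -> computable n.+2 s ->
  computable n.+1
    (fun v => primrec (b (behead v)) (fun k y => s [:: k, y & behead v]) (head 0 v)).
Proof.
case=> cb Hb [cs Hs]; exists (PRec cb cs) => -[|k w] //= [Hw].
elim: k => [|k IH] /=; first by constructor; apply: Hb.
by econstructor; [exact: IH | apply: Hs; rewrite /= Hw].
Qed.

Definition computable1 (f : nat -> nat) := computable 1 (fun v => f (nth 0 v 0)).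
Definition computable2 (f : nat -> nat -> nat) :=
  computable 2 (fun v => f (nth 0 v 0) (nth 0 v 1)).
Definition computable3 (f : nat -> nat -> nat -> nat) :=
  computable 3 (fun v => f (nth 0 v 0) (nth 0 v 1) (nth 0 v 2)).
Definition computable4 (f : nat -> nat -> nat -> nat -> nat) :=
  computable 4 (fun v => f (nth 0 v 0) (nth 0 v 1) (nth 0 v 2) (nth 0 v 3)).

Lemma computable_app1 n f g : computable1 f -> computable n g ->
  computable n (fun v => f (g v)).
Proof. by move=> cf cg; apply: (computable_comp (fs := [:: g]) cf). Qed.

Lemma computable_app2 n f g1 g2 : computable2 f ->
  computable n g1 -> computable n g2 -> computable n (fun v => f (g1 v) (g2 v)).
Proof. by move=> cf c1 c2; apply: (computable_comp (fs := [:: g1; g2]) cf). Qed.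

Lemma computable_app3 n f g1 g2 g3 : computable3 f ->
  computable n g1 -> computable n g2 -> computable n g3 ->
  computable n (fun v => f (g1 v) (g2 v) (g3 v)).
Proof.
by move=> cf c1 c2 c3; apply: (computable_comp (fs := [:: g1; g2; g3]) cf).
Qed.

Create HintDb computable.

Ltac computable_tac :=
  match goal with
  | |- computable1 (fun _ => _) => rewrite /computable1; cbv beta; computable_tac
  | |- computable2 (fun _ _ => _) => rewrite /computable2; cbv beta; computable_tac
  | |- computable3 (fun _ _ _ => _) => rewrite /computable3; cbv beta; computable_tac
  | |- computable4 (fun _ _ _ _ => _) => rewrite /computable4; cbv beta; computable_tac
  | |- computable _ (fun v => nth 0 v _) => apply: computable_proj
  | |- computable _ (fun _ => ?k) => apply: computable_const
  | |- computable _ (fun v => S (@?a v)) => apply: computable_succ; computable_tac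
  | |- computable _ (fun v => ?f (@?a v) (@?b v) (@?c v)) =>
      apply: (@computable_app3 _ f);
      [solve [eauto with computable] | computable_tac | computable_tac | computable_tac]
  | |- computable _ (fun v => ?f (@?a v) (@?b v)) =>
      apply: (@computable_app2 _ f);
      [solve [eauto with computable] | computable_tac | computable_tac]
  | |- computable _ (fun v => ?f (@?a v)) =>
      apply: (@computable_app1 _ f); [solve [eauto with computable] | computable_tac]
  end.

Hint Extern 4 (computable2 (fun _ _ => _)) => computable_tac : computable.
Hint Extern 4 (computable3 (fun _ _ _ => _)) => computable_tac : computable.

Lemma computable_by_primrec f b s : computable2 s ->
  f 0 = b -> (forall k, f k.+1 = s k (f k)) -> computable1 f.
Proof.
move=> cs f0 fS.
have := computable_primrec (n := 0) (computable_const 0 b) cs.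
apply: eq_computable => -[|k [|]] //= _; elim: k => //= k ->; exact/esym/fS.
Qed.

Definition primrec1 b s k (x : nat) := primrec (b x) (fun k y => s k y x) k.

Lemma computable_primrec1 b s : computable1 b -> computable3 s ->
  computable2 (primrec1 b s).
Proof.
move=> cb cs; have := computable_primrec (n := 1) cb cs.
by apply: eq_computable => -[|k [|x []]].
Qed.

Lemma computable_by_primrec1 f b s : computable1 b -> computable3 s ->
  (forall x, f 0 x = b x) -> (forall k x, f k.+1 x = s k (f k x) x) ->
  computable2 f.
Proof.
move=> cb cs f0 fS; have := computable_primrec1 cb cs.
apply: eq_computable => v _; rewrite /primrec1.
by elim: (nth 0 v 0) => //= k ->; rewrite fS.
Qed.

Definition primrec2 b s k (x z : nat) := primrec (b x z) (fun k y => s k y x z) k.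

Lemma computable_primrec2 b s : computable2 b -> computable4 s ->
  computable3 (primrec2 b s).
Proof.
move=> cb cs; have := computable_primrec (n := 2) cb cs.
by apply: eq_computable => -[|k [|x [|z []]]].
Qed.

Definition ifnz (c a b : nat) : nat := if c is 0 then b else a.

Lemma computable_ifnz : computable3 ifnz.
Proof.
have := computable_primrec (n := 2) (computable_proj 2 1) (computable_proj 4 2).
by apply: eq_computable => -[|[|c] [|a [|b []]]].
Qed.

Lemma computable_add : computable2 addn.
Proof.
by apply: (@computable_by_primrec1 _ (fun x => x) (fun _ y _ => y.+1)) => //;
  computable_tac.
Qed.
Hint Resolve computable_ifnz computable_add : computable.

Lemma computable_double : computable1 double.
Proof.
have : computable1 (fun x => x + x) by computable_tac.
by apply: eq_computable => v _; rewrite addnn.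
Qed.

Lemma computable_mul : computable2 muln.
Proof.
apply: (@computable_by_primrec1 _ (fun=> 0) (fun _ y x => y + x)) => //;
  [computable_tac | computable_tac | by move=> k x; rewrite mulSn addnC].
Qed.
Hint Resolve computable_double computable_mul : computable.

Lemma computable_pred : computable1 predn.
Proof.
by apply: (@computable_by_primrec _ 0 (fun k _ => k)); first computable_tac.
Qed.
Hint Resolve computable_pred : computable.

Lemma computable_sub : computable2 subn.
Proof.
have csub : computable2 (fun k x => x - k).
  apply: (@computable_by_primrec1 _ (fun x => x) (fun _ y _ => y.-1));
    [computable_tac | computable_tac | exact: subn0 | by move=> k x; rewrite subnS].
exact: computable_app2 csub (computable_proj 2 1) (computable_proj 2 0).
Qed.

Lemma computable_exp : computable2 expn.
Proof.
have cexp : computable2 (fun k x => x ^ k).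
  apply: (@computable_by_primrec1 _ (fun=> 1) (fun _ y x => y * x));
    [computable_tac | computable_tac | exact: expn0 | by move=> k x; rewrite expnSr].
exact: computable_app2 cexp (computable_proj 2 1) (computable_proj 2 0).
Qed.
Hint Resolve computable_sub computable_exp : computable.

Lemma computable_half : computable1 half.
Proof.
apply: (@computable_by_primrec _ 0 (fun k y => k - y)) => //; first computable_tac.
by move=> k /=; rewrite -{2}(odd_double_half k) uphalf_half -addnn addnA addnK.
Qed.
Hint Resolve computable_half : computable.

Definition oddN (k : nat) : nat := odd k.

Lemma computable_oddN : computable1 oddN.
Proof.
have : computable1 (fun k => k - k./2.*2) by computable_tac.
by apply: eq_computable => v _; rewrite -{1}(odd_double_half (nth 0 v 0)) addnK.
Qed.

Definition eqN (a b : nat) : nat := a == b.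
Definition ltN (a b : nat) : nat := a < b.
Definition leN (a b : nat) : nat := a <= b.

Lemma ifnz01 c : ifnz c 1 0 = (0 < c). Proof. by case: c. Qed.
Lemma ifnz10 c : ifnz c 0 1 = (c == 0). Proof. by case: c. Qed.

Lemma computable_eqN : computable2 eqN.
Proof.
have : computable2 (fun a b => ifnz ((a - b) + (b - a)) 0 1) by computable_tac.
by apply: eq_computable => v _; rewrite ifnz10 addn_eq0 !subn_eq0 -eqn_leq.
Qed.

Lemma computable_ltN : computable2 ltN.
Proof.
have : computable2 (fun a b => ifnz (b - a) 1 0) by computable_tac.
by apply: eq_computable => v _; rewrite ifnz01 subn_gt0.
Qed.

Lemma computable_leN : computable2 leN.
Proof.
have : computable2 (fun a b => ifnz (a - b) 0 1) by computable_tac.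
by apply: eq_computable => v _; rewrite ifnz10 subn_eq0.
Qed.
Hint Resolve computable_oddN computable_eqN computable_ltN computable_leN : computable.

Lemma eqNE a b : (0 < eqN a b) = (a == b). Proof. by rewrite /eqN; case: (a == b). Qed.
Lemma ltNE a b : (0 < ltN a b) = (a < b). Proof. by rewrite /ltN; case: (a < b). Qed.
Lemma leNE a b : (0 < leN a b) = (a <= b). Proof. by rewrite /leN; case: (a <= b). Qed.

Definition findlt B (P : nat -> nat) :=
  primrec 0 (fun B y => ifnz (eqN y B) (ifnz (P B) B B.+1) y) B.

Lemma findltS B P : findlt B.+1 P =
  if findlt B P == B then (if P B is 0 then B.+1 else B) else findlt B P.
Proof. by rewrite {1}/findlt /= -/(findlt B P) /eqN; case: eqP. Qed.

Lemma findlt_spec B P :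
  [/\ findlt B P <= B, forall j, j < findlt B P -> P j = 0 &
      findlt B P < B -> 0 < P (findlt B P)].
Proof.
elim: B => [|B [le_B zero_below pos_at]] //; rewrite findltS.
have [E|NE] := eqVneq (findlt B P) B; last first.
  have lt : findlt B P < B by rewrite ltn_neqAle NE.
  by split; [exact: leqW | exact: zero_below | move=> _; apply: pos_at].
case PB: (P B) => [|m]; split=> //; rewrite ?E ?PB ?ltnn //.
- move=> j; rewrite ltnS leq_eqVlt => /predU1P[-> // | jB].
  by apply: zero_below; rewrite E.
- by rewrite -E.
Qed.

Lemma findlt_eq B P k : k < B -> 0 < P k -> (forall j, j < k -> P j = 0) ->
  findlt B P = k.
Proof.
move=> kB Pk min_k; have [le_B zero_below pos_at] := findlt_spec B P.
case: (ltngtP (findlt B P) k) => // lt.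
  by have := pos_at (ltn_trans lt kB); rewrite min_k.
by move: Pk; rewrite zero_below.
Qed.

Definition find1 (P : nat -> nat -> nat) B x := findlt B (P ^~ x).
Definition find2 (P : nat -> nat -> nat -> nat) B x z := findlt B (fun k => P k x z).

Lemma find1_le P B x : find1 P B x <= B.
Proof. by case: (findlt_spec B (P ^~ x)). Qed.

Lemma computable_find1 P : computable2 P -> computable2 (find1 P).
Proof.
move=> cP; have : computable2 (primrec1 (fun=> 0)
  (fun B y x => ifnz (eqN y B) (ifnz (P B x) B B.+1) y)).
  by apply: computable_primrec1; computable_tac.
exact.
Qed.

Lemma computable_find2 P : computable3 P -> computable3 (find2 P).
Proof.
move=> cP; have : computable3 (primrec2 (fun _ _ => 0)
  (fun B y x z => ifnz (eqN y B) (ifnz (P B x z) B B.+1) y)).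
  by apply: computable_primrec2; computable_tac.
exact.
Qed.
Hint Resolve computable_find1 computable_find2 : computable.

Definition bexN B (P : nat -> nat) := ltN (findlt B P) B.
Definition ballN B (P : nat -> nat) := eqN (bexN B (fun k => eqN (P k) 0)) 0.

Lemma bexNP B P : reflect (exists2 k, k < B & 0 < P k) (0 < bexN B P).
Proof.
rewrite /bexN ltNE; have [le_B zero_below pos_at] := findlt_spec B P.
apply: (iffP idP) => [lt|[k kB Pk]]; first by exists (findlt B P); last exact: pos_at.
rewrite ltn_neqAle le_B andbT; apply: contraTneq Pk => E.
by rewrite zero_below // E.
Qed.

Lemma ballNP B P : reflect (forall k, k < B -> 0 < P k) (0 < ballN B P).
Proof.
rewrite /ballN eqNE; apply: (iffP eqP) => [none k kB | all_pos].
  rewrite lt0n; apply: contra_eqN none => Pk0; rewrite -lt0n.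
  by apply/bexNP; exists k; rewrite ?eqNE.
apply/eqP; rewrite -leqn0 leqNgt; apply/bexNP => -[k kB].
by rewrite eqNE -leqn0 leqNgt all_pos.
Qed.

Definition bex1 (P : nat -> nat -> nat) B x := bexN B (P ^~ x).
Definition bex2 (P : nat -> nat -> nat -> nat) B x z := bexN B (fun k => P k x z).
Definition ball1 (P : nat -> nat -> nat) B x := ballN B (P ^~ x).
Definition ball2 (P : nat -> nat -> nat -> nat) B x z := ballN B (fun k => P k x z).

Lemma computable_bex1 P : computable2 P -> computable2 (bex1 P).
Proof.
by move=> cP; have : computable2 (fun B x => ltN (find1 P B x) B) by computable_tac.
Qed.

Lemma computable_bex2 P : computable3 P -> computable3 (bex2 P).
Proof.
by move=> cP; have : computable3 (fun B x z => ltN (find2 P B x z) B) by computable_tac.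
Qed.
Hint Resolve computable_bex1 computable_bex2 : computable.

Lemma computable_ball1 P : computable2 P -> computable2 (ball1 P).
Proof.
move=> cP.
by have : computable2 (fun B x => eqN (bex1 (fun k x => eqN (P k x) 0) B x) 0)
  by computable_tac.
Qed.

Lemma computable_ball2 P : computable3 P -> computable3 (ball2 P).
Proof.
move=> cP.
by have : computable3 (fun B x z => eqN (bex2 (fun k x z => eqN (P k x z) 0) B x z) 0)
  by computable_tac.
Qed.
Hint Resolve computable_ball1 computable_ball2 : computable.

Definition consN x m := 2 ^ x * m.*2.+1.

Lemma computable_consN : computable2 consN.
Proof. by rewrite /consN; computable_tac. Qed.
Hint Resolve computable_consN : computable.

Lemma consN_code x s : consN x (CodeSeq.code s) = CodeSeq.code (x :: s).
Proof. by []. Qed.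

Lemma consN_inj x y w z : consN x w = consN y z -> x = y /\ w = z.
Proof.
rewrite -[w]CodeSeq.decodeK -[z]CodeSeq.decodeK !consN_code.
by move/(can_inj CodeSeq.codeK) => [-> ->].
Qed.

Lemma ltn_consN_hd x w : x < consN x w.
Proof. by rewrite (leq_trans (ltn_expl x (ltnSn 1))) // leq_pmulr. Qed.

Lemma ltn_consN_tl x w : w < consN x w.
Proof.
apply: (@leq_trans w.*2.+1); first by rewrite ltnS -addnn leq_addr.
by rewrite leq_pmull ?expn_gt0.
Qed.

Lemma leq_ltn_consN x y w z : x <= y -> w < z -> consN x w < consN y z.
Proof.
move=> le_xy lt_wz; apply: (@leq_ltn_trans (consN y w)).
  by rewrite leq_mul2r leq_pexp2l ?orbT.
by rewrite ltn_pmul2l ?expn_gt0 // ltnS ltn_double.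
Qed.

Definition hdN m := find1 (fun x m => bex2 (fun w x m => eqN (consN x w) m) m x m) m m.
Definition tlN m := find1 (fun w m => bex2 (fun x w m => eqN (consN x w) m) m w m) m m.

Lemma computable_hdN : computable1 hdN. Proof. by rewrite /hdN; computable_tac. Qed.
Lemma computable_tlN : computable1 tlN. Proof. by rewrite /tlN; computable_tac. Qed.
Hint Resolve computable_hdN computable_tlN : computable.

Lemma hdN_consN x w : hdN (consN x w) = x.
Proof.
apply: findlt_eq (ltn_consN_hd x w) _ _.
  by apply/bexNP; exists w; rewrite ?ltn_consN_tl ?eqNE.
move=> j lt_jx; apply/eqP; rewrite -leqn0 leqNgt; apply/bexNP => -[w' _].
by rewrite eqNE => /eqP/consN_inj[E _]; rewrite E ltnn in lt_jx.
Qed.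

Lemma tlN_consN x w : tlN (consN x w) = w.
Proof.
apply: findlt_eq (ltn_consN_tl x w) _ _.
  by apply/bexNP; exists x; rewrite ?ltn_consN_hd ?eqNE.
move=> j lt_jw; apply/eqP; rewrite -leqn0 leqNgt; apply/bexNP => -[x' _].
by rewrite eqNE => /eqP/consN_inj[_ E]; rewrite E ltnn in lt_jw.
Qed.

Lemma hdN_le m : hdN m <= m.
Proof. exact: find1_le. Qed.

Lemma tlN_le m : tlN m <= m.
Proof. exact: find1_le. Qed.

Lemma hdN_code s : hdN (CodeSeq.code s) = head 0 s.
Proof. by case: s => [|x s] //; rewrite -consN_code hdN_consN. Qed.

Lemma tlN_code s : tlN (CodeSeq.code s) = CodeSeq.code (behead s).
Proof. by case: s => [|x s] //; rewrite -consN_code tlN_consN. Qed.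

Definition dropN := primrec1 (fun m => m) (fun _ y _ => tlN y).
Definition nthN m i := hdN (dropN i m).
Definition sizeN m := find1 (fun k m => eqN (dropN k m) 0) m.+1 m.

Lemma computable_dropN : computable2 dropN.
Proof. by apply: computable_primrec1; computable_tac. Qed.
Hint Resolve computable_dropN : computable.

Lemma computable_nthN : computable2 nthN. Proof. by rewrite /nthN; computable_tac. Qed.
Lemma computable_sizeN : computable1 sizeN.
Proof. by rewrite /sizeN; computable_tac. Qed.
Hint Resolve computable_nthN computable_sizeN : computable.

Lemma dropN_code k s : dropN k (CodeSeq.code s) = CodeSeq.code (drop k s).
Proof.
elim: k => [|k IH]; first by rewrite drop0.
by rewrite -[LHS]/(tlN (dropN k _)) IH tlN_code -drop1 drop_drop.
Qed.

Lemma nthN_code s i : nthN (CodeSeq.code s) i = nth 0 s i.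
Proof. by rewrite /nthN dropN_code hdN_code -nth0 nth_drop addn0. Qed.

Lemma size_le_code s : size s <= CodeSeq.code s.
Proof.
elim: s => [|x s IH] //.
by rewrite -consN_code (leq_ltn_trans IH (ltn_consN_tl _ _)).
Qed.

Lemma code_eq0 s : (CodeSeq.code s == 0) = (s == [::]).
Proof.
case: s => [|x s] //.
by rewrite -consN_code gtn_eqF // (leq_ltn_trans _ (ltn_consN_hd x _)).
Qed.

Lemma sizeN_code s : sizeN (CodeSeq.code s) = size s.
Proof.
apply: findlt_eq => [|/=|j lt_js /=]; first by rewrite ltnS size_le_code.
  by rewrite eqNE dropN_code code_eq0 -size_eq0 size_drop subnn.
apply/eqP; rewrite -leqn0 leqNgt eqNE dropN_code code_eq0 -size_eq0 size_drop.
by rewrite subn_eq0 -ltnNge.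
Qed.

Lemma computable_code_map_iota E len : computable2 E -> computable1 len ->
  computable1 (fun x => CodeSeq.code [seq E x k | k <- iota 0 (len x)]).
Proof.
move=> cE clen.
pose r := primrec1 (fun=> 0) (fun j y x => consN (E x (len x - j.+1)) y).
have cr : computable2 r by apply: computable_primrec1; computable_tac.
have rE j x : j <= len x ->
    r j x = CodeSeq.code [seq E x k | k <- iota (len x - j) j].
  elim: j => [|j IH] lt_jl //.
  rewrite -[r j.+1 x]/(consN (E x (len x - j.+1)) (r j x)) IH ?(ltnW lt_jl) //.
  by rewrite consN_code [iota _ j.+1]/= subnSK.
have : computable1 (fun x => r (len x) x) by computable_tac.
by apply: eq_computable => v _; rewrite rE // subnn.
Qed.

Lemma computable1_nat h : computable1 h -> computable_nat h.
Proof. by case=> c Hc; exists c => x; apply: (Hc [:: x]). Qed.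

(* The finite approximation, on an input prefix [s], of the functional [a |-> E a],
   when the first [len n] output entries depend only on the first [n] input entries. *)
Definition local_map (E : (nat -> nat) -> nat -> nat) len (s : seq nat) :=
  [seq E (nth 0 s) k | k <- iota 0 (len (size s))].

Lemma computable_seq_local_map E len :
  computable2 (fun x => E (nthN x)) -> computable1 len ->
  computable_seq (local_map E len).
Proof.
move=> cE clen; apply: computable1_nat.
have : computable1 (fun x => len (sizeN x)) by computable_tac.
move/(computable_code_map_iota cE); apply: eq_computable => v _.
set x := nth 0 v 0; rewrite -[x in sizeN x]CodeSeq.decodeK sizeN_code.
suff -> : nthN x = nth 0 (CodeSeq.decode x) by [].
by apply: functional_extensionality => i; rewrite -nthN_code CodeSeq.decodeK.
Qed.

Lemma fcomputes_local_map E len p :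
  (forall i, exists n, i < len n) ->
  (forall n k a, k < len n -> (forall j, j < n -> a j = p j) -> E a k = E p k) ->
  fcomputes (local_map E len) p (E p).
Proof.
move=> unbounded local; split=> [i | n i]; rewrite /Defs.prefix.
  by have [n lt_in] := unbounded i; exists n; rewrite size_map size_iota size_mkseq.
rewrite /local_map size_mkseq size_map size_iota => lt_i.
rewrite (nth_map 0) ?size_iota // nth_iota // add0n.
by apply: (local n) => // j lt_jn; rewrite nth_mkseq.
Qed.

Definition product_string (S1 S2 T : seq nat) : Prop :=
  [/\ sorted ltn T, 1 < size T,
      hdN (nth 0 T 0) < hdN (nth 0 T 1) /\ tlN (nth 0 T 0) < tlN (nth 0 T 1),
      size S1 <= size T /\ is_prefix_of S1 (hdN \o nth 0 T) &
      size S2 <= size T /\ is_prefix_of S2 (tlN \o nth 0 T)].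

Definition sortedN t := ball1 (fun k t => ltN (nthN t k) (nthN t k.+1)) (sizeN t).-1 t.

Definition coord_prefixN (c : nat -> nat) s t :=
  leN (sizeN s) (sizeN t) *
  ball2 (fun k s t => eqN (nthN s k) (c (nthN t k))) (sizeN s) s t.

Definition product_stringN s1 s2 t :=
  sortedN t * (ltN 1 (sizeN t) *
  (ltN (hdN (nthN t 0)) (hdN (nthN t 1)) * ltN (tlN (nthN t 0)) (tlN (nthN t 1)) *
  (coord_prefixN hdN s1 t * coord_prefixN tlN s2 t))).

Lemma computable_coord_prefixN c : computable1 c -> computable2 (coord_prefixN c).
Proof. by move=> cc; rewrite /coord_prefixN; computable_tac. Qed.
Hint Resolve computable_coord_prefixN : computable.

Lemma computable_product_stringN : computable3 product_stringN.
Proof. by rewrite /product_stringN /sortedN; computable_tac. Qed.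
Hint Resolve computable_product_stringN : computable.

Lemma sortedNP T : reflect (sorted ltn T) (0 < sortedN (CodeSeq.code T)).
Proof.
rewrite /sortedN sizeN_code; apply: (iffP (ballNP _ _)) => [lt_next|].
  apply/(sortedP 0) => k lt_k.
  by have := lt_next k; rewrite !nthN_code ltNE ltn_predRL; apply.
move/(sortedP 0) => lt_next k.
by rewrite ltn_predRL !nthN_code ltNE; apply: lt_next.
Qed.

Lemma coord_prefixNP c S T :
  reflect (size S <= size T /\ is_prefix_of S (c \o nth 0 T))
          (0 < coord_prefixN c (CodeSeq.code S) (CodeSeq.code T)).
Proof.
rewrite /coord_prefixN muln_gt0 !sizeN_code leNE.
apply: (iffP andP) => -[le_ST pre]; split=> //.
  by move=> k lt_k; move/ballNP/(_ k lt_k): pre; rewrite !nthN_code eqNE => /eqP.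
by apply/ballNP => k lt_k; rewrite !nthN_code eqNE pre.
Qed.

Lemma product_stringNP S1 S2 T :
  reflect (product_string S1 S2 T)
          (0 < product_stringN (CodeSeq.code S1) (CodeSeq.code S2) (CodeSeq.code T)).
Proof.
rewrite /product_stringN 5!muln_gt0 sizeN_code !nthN_code !ltNE.
by apply: (iffP and5P) =>
  -[/sortedNP ? ? /andP ? /coord_prefixNP ? /coord_prefixNP ?].
Qed.

(* [n] codes a triple [(i, j, T)] as [consN i (consN j (code T))]; the string [T] is
   listed when it passes [product_string] against the [i]-th string of the left name
   and the [j]-th string of the right name. *)
Definition product_name (a : nat -> nat) n :=
  ifnz (ltN 0 (pleft a (hdN n)) * (ltN 0 (pright a (hdN (tlN n))) *
        product_stringN (pleft a (hdN n)).-1 (pright a (hdN (tlN n))).-1 (tlN (tlN n))))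
       (tlN (tlN n)).+1 0.

Definition product_ok (a : nat -> nat) n : Prop :=
  [/\ 0 < pleft a (hdN n), 0 < pright a (hdN (tlN n)) &
      product_string (CodeSeq.decode (pleft a (hdN n)).-1)
        (CodeSeq.decode (pright a (hdN (tlN n))).-1) (CodeSeq.decode (tlN (tlN n)))].

Lemma product_name_pos a n : 0 < product_name a n <-> product_ok a n.
Proof.
have ifnz_pos c m : (0 < ifnz c m.+1 0) = (0 < c) by case: c.
rewrite /product_name ifnz_pos 2!muln_gt0 !ltNE.
rewrite -[(pleft a _).-1]CodeSeq.decodeK -[(pright a _).-1]CodeSeq.decodeK.
rewrite -[X in product_stringN _ _ X]CodeSeq.decodeK.
by split=> [/and3P[? ? /product_stringNP ?] | [? ? /product_stringNP ?]];
  [split | apply/and3P].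
Qed.

Lemma product_name_val a n :
  0 < product_name a n -> (product_name a n).-1 = tlN (tlN n).
Proof. by rewrite /product_name; case: (_ * _). Qed.

Definition listed_prefix (p f : baire) : Prop :=
  exists n, 0 < p n /\ is_prefix_of (CodeSeq.decode (p n).-1) f.

Lemma incr_homo f : incr f -> {homo f : m n / m < n}.
Proof. exact: homo_ltn ltn_trans. Qed.

Lemma incr_comp f g : incr f -> incr g -> incr (f \o g).
Proof. by move=> /incr_homo incr_f incr_g n; apply: incr_f. Qed.

Lemma sorted_mkseq f n : incr f -> sorted ltn (mkseq f n).
Proof. by move/incr_homo/homo_sorted; apply; apply: iota_ltn_sorted. Qed.

Lemma product_name_open p f : open_of (product_name p) f ->
  [/\ hdN (f 0) < hdN (f 1), tlN (f 0) < tlN (f 1),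
      listed_prefix (pleft p) (hdN \o f) & listed_prefix (pright p) (tlN \o f)].
Proof.
case=> _ [n [pos pre]]; rewrite product_name_val // in pre.
have [pos1 pos2 [_ two [lt_hd lt_tl] [le1 pre1] [le2 pre2]]] :=
  (product_name_pos p n).1 pos.
set T := CodeSeq.decode _ in pre two lt_hd lt_tl le1 pre1 le2 pre2.
have Tf k : k < size T -> nth 0 T k = f k by apply: pre.
rewrite -!Tf ?(ltnW two) //; split=> //.
  by exists (hdN n); split=> // k lt_k; rewrite pre1 //= Tf // (leq_trans lt_k).
by exists (hdN (tlN n)); split=> // k lt_k; rewrite pre2 //= Tf // (leq_trans lt_k).
Qed.

Lemma open_product_name p f : incr f ->
  hdN (f 0) < hdN (f 1) -> tlN (f 0) < tlN (f 1) ->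
  listed_prefix (pleft p) (hdN \o f) -> listed_prefix (pright p) (tlN \o f) ->
  open_of (product_name p) f.
Proof.
move=> incr_f lt_hd lt_tl [i [pos1 pre1]] [j [pos2 pre2]]; split=> //.
set S1 := CodeSeq.decode _ in pre1; set S2 := CodeSeq.decode _ in pre2.
pose T := mkseq f (maxn 2 (maxn (size S1) (size S2))).
have sizeT : size T = maxn 2 (maxn (size S1) (size S2)) := size_mkseq _ _.
have le1 : size S1 <= size T by rewrite sizeT !leq_max leqnn !orbT.
have le2 : size S2 <= size T by rewrite sizeT !leq_max leqnn !orbT.
have two : 1 < size T by rewrite sizeT leq_max leqnn.
have Tf k : k < size T -> nth 0 T k = f k by rewrite sizeT; apply: nth_mkseq.
have ok : product_ok p (consN i (consN j (CodeSeq.code T))).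
  rewrite /product_ok !(hdN_consN, tlN_consN) CodeSeq.codeK; split=> //; split=> //.
  - exact: sorted_mkseq.
  - by rewrite !Tf ?(ltnW two).
  - by split=> // k lt_k /=; rewrite Tf ?(leq_trans lt_k) // pre1.
  - by split=> // k lt_k /=; rewrite Tf ?(leq_trans lt_k) // pre2.
have pos := (product_name_pos _ _).2 ok.
exists (consN i (consN j (CodeSeq.code T))); split=> //.
by rewrite product_name_val // !tlN_consN CodeSeq.codeK.
Qed.

Lemma homogeneous_subseq P f :
  homogeneous P f -> P f -> forall g, incr g -> P (f \o g).
Proof. by case=> _ [//|none] Pf; have := none id ltnSn. Qed.

Lemma FindHS_sol_subseq p h :
  (forall g, incr g -> h (g 0) < h (g 1) /\ listed_prefix p (h \o g)) ->
  FindHS_sol p h.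
Proof.
move=> sub.
have incr_h : incr h.
  move=> m; have shift : incr (addn m) by move=> k; rewrite addnS.
  by have [] := sub _ shift; rewrite addn0 addn1.
have open_sub g : incr g -> open_of p (h \o g).
  by move=> incr_g; split; [exact: incr_comp | case: (sub g incr_g)].
by split; [split=> //; left | exact: (open_sub id ltnSn)].
Qed.

Lemma FindHS_dom_product_name p : FindHS2_dom p -> FindHS_dom (product_name p).
Proof.
case=> -[_ [f1 [hom1 in1]]] [_ [f2 [hom2 in2]]]; split.
  move=> n pos; have [_ _ [srt _ _ _ _]] := (product_name_pos p n).1 pos.
  by rewrite product_name_val.
pose F m := consN (f1 m) (f2 m).
have hdF : hdN \o F = f1 by apply: functional_extensionality => m; apply: hdN_consN.
have tlF : tlN \o F = f2 by apply: functional_extensionality => m; apply: tlN_consN.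
have incr_F : incr F by move=> m; apply: leq_ltn_consN (ltnW (hom1.1 m)) (hom2.1 m).
exists F; apply: FindHS_sol_subseq => g incr_g.
have incr_Fg := incr_comp incr_F incr_g.
split; first exact: incr_Fg 0.
apply: (open_product_name incr_Fg _ _ _ _).2.
- by rewrite /= !hdN_consN; apply: incr_homo (hom1.1) _ _ (incr_g 0).
- by rewrite /= !tlN_consN; apply: incr_homo (hom2.1) _ _ (incr_g 0).
- rewrite -[_ \o (F \o g)]/((hdN \o F) \o g) hdF.
  by case: (homogeneous_subseq hom1 in1 incr_g).
- rewrite -[_ \o (F \o g)]/((tlN \o F) \o g) tlF.
  by case: (homogeneous_subseq hom2 in2 incr_g).
Qed.

Definition split_name (a : nat -> nat) m := ifnz (oddN m) (tlN (a m./2)) (hdN (a m./2)).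

Lemma pleft_split_name R : pleft (split_name R) = hdN \o R.
Proof.
apply: functional_extensionality => m.
by rewrite /pleft /split_name /oddN odd_double doubleK.
Qed.

Lemma pright_split_name R : pright (split_name R) = tlN \o R.
Proof.
apply: functional_extensionality => m.
by rewrite /pright /split_name /oddN /= odd_double uphalf_double.
Qed.

Lemma FindHS2_sol_split_name p R :
  FindHS_sol (product_name p) R -> FindHS2_sol p (split_name R).
Proof.
case=> hom inR; rewrite /FindHS2_sol pleft_split_name pright_split_name.
have coords g : incr g -> _ := fun incr_g =>
  product_name_open (homogeneous_subseq hom inR incr_g).
by split; apply: FindHS_sol_subseq => g /coords[].
Qed.

Lemma computable_product_name : computable2 (fun x => product_name (nthN x)).
Proof. by rewrite /product_name /pleft /pright; cbv beta; computable_tac. Qed.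

Lemma computable_split_name : computable2 (fun x => split_name (nthN x)).
Proof. by rewrite /split_name; cbv beta; computable_tac. Qed.

Lemma fcomputes_product_name p :
  fcomputes (local_map product_name half) p (product_name p).
Proof.
apply: fcomputes_local_map => [i | n k a].
  by exists i.+1.*2; rewrite doubleK.
rewrite gtn_half_double => lt_kn eq_ap; rewrite /product_name /pleft /pright !eq_ap //.
- have := hdN_le (tlN k); have := tlN_le k; lia.
- have := hdN_le k; lia.
Qed.

Lemma fcomputes_split_name R :
  fcomputes (local_map split_name double) R (split_name R).
Proof.
apply: fcomputes_local_map => [i | n m a].
  by exists i.+1; rewrite -addnn addnS ltnS leq_addl.
by rewrite -ltn_half_double => lt_mn eq_aR; rewrite /split_name eq_aR.
Qed.

Theorem mainTheorem10 :
  sW_le FindHS2_dom FindHS2_sol FindHS_dom FindHS_sol.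
Proof.
exists (local_map product_name half), (local_map split_name double); split.
  exact: computable_seq_local_map computable_product_name computable_half.
split; first exact: computable_seq_local_map computable_split_name computable_double.
move=> G realG p domp; exists (product_name p).
split; first exact: fcomputes_product_name.
exists (split_name (G (product_name p))); split; first exact: fcomputes_split_name.
by apply/FindHS2_sol_split_name/realG/FindHS_dom_product_name.
Qed.
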